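(* For every $n\in\mathbb{N}$ and every $l\in\{0,1,\dots,8\}$ there is an outerplanar graph $G$ with $|V(G)|>n$, $|V_1(G)|=l$ and $\rho_G^4=3-\sigma_G^4$ that has no equitable $4$-coloring.
   Context: For a graph $G$, $V_1(G)$ is the set of vertices of degree $1$, and for $A\subseteq V(G)$, $\|G[A]\|$ is the number of edges of $G[A]$. Define $\rho_G^4(A)=4\|G[A]\|-5|A|+2|A\cap V_1(G)|$, $\rho_G^4=\max_{A\subseteq V(G)}\rho_G^4(A)$ (including $A=\emptyset$), and $\sigma_G^4=|V_1(G)|\bmod 2$. An equitable $4$-coloring is a proper vertex coloring with $4$ colors in which the sizes of any two color classes differ by at most $1$. *)

From mathcomp Require Import all_boot all_order all_algebra.
Set Implicit Arguments. Unset Strict Implicit. Unset Printing Implicit Defensive.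
Import Order.TTheory GRing.Theory Num.Theory.

Definition simple_graph (T : finType) (e : rel T) : Prop :=
  (forall x y, e x y = e y x) /\ (forall x, ~~ e x x).

(* Outerplanar: the vertices can be placed in convex position (on a circle),
   in some cyclic order given by an injective position map f, so that the
   edges, drawn as chords, do not cross. *)
Definition outerplanar (T : finType) (e : rel T) : Prop :=
  exists f : T -> nat, injective f /\
    forall a b c d, e a b -> e c d ->
      ~ [/\ (f a < f c)%N, (f c < f b)%N & (f b < f d)%N].

Definition degree (T : finType) (e : rel T) (v : T) : nat := #|[set u | e v u]|.

Definition V1 (T : finType) (e : rel T) : {set T} := [set v | degree e v == 1%N].

Definition nedges_in (T : finType) (e : rel T) (A : {set T}) : nat :=
  #|[set E : {set T} | [exists x in A, exists y in A, e x y && (E == [set x; y])]]|.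

Local Open Scope ring_scope.

Definition rho4A (T : finType) (e : rel T) (A : {set T}) : int :=
  4%:Z * (nedges_in e A)%:Z - 5%:Z * #|A|%:Z + 2%:Z * #|A :&: V1 e|%:Z.

(* rho^4_G = max over all A (including the empty set, whose value is 0,
   so starting the max at 0 does not change it). *)
Definition rho4 (T : finType) (e : rel T) : int :=
  \big[Num.max/0]_(A : {set T}) rho4A e A.

Definition sigma4 (T : finType) (e : rel T) : nat := (#|V1 e| %% 2)%N.

Definition equitable_4coloring (T : finType) (e : rel T) (c : T -> 'I_4) : Prop :=
  (forall x y, e x y -> c x != c y) /\
  (forall i j : 'I_4, (#|[set x | c x == i]| <= #|[set x | c x == j]| + 1)%N).

From mathcomp Require Import all_boot all_order all_algebra.
From mathcomp Require Import zify.
Set Implicit Arguments. Unset Strict Implicit. Unset Printing Implicit Defensive.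
Import Order.TTheory GRing.Theory Num.Theory.

(* The witness is a "flower": a hub adjacent to every other vertex, whose
   petals are a triangles, l pendant leaves and t pentagons through the hub,
   with 2a + l = 8 - (l mod 2).  Drawing the vertices around a circle in the
   order hub, petal after petal, makes it outerplanar.

   Charging every edge of G[A] to its larger endpoint splits rho(A) into the
   contributions of the petals: -5 for the hub and, when the hub lies in A, at
   most 2 per triangle, 1 per leaf and 0 per pentagon (without the hub every
   petal contributes at most 0).  Hence rho = 2a + l - 5 = 3 - sigma, attained
   by A = V(G).

   In a proper colouring the class of the hub contains no other vertex of the
   triangles and leaves, and at most one vertex of each pentagon (the two
   vertices of a pentagon missed by the hub are adjacent), so it has at most
   t + 1 vertices.  An equitable 4-colouring would then cover at most
   (t + 1) + 3 (t + 2) = 4t + 7 < 4t + 8 <= |V(G)| vertices. *)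

Lemma rho4A_set0 (T : finType) (e : rel T) : rho4A e set0 = 0%R.
Proof.
rewrite /rho4A set0I cards0.
have -> : nedges_in e set0 = 0.
  apply/eqP; rewrite cards_eq0; apply/eqP/setP => E; rewrite !inE.
  by apply/exists_inP => -[x]; rewrite inE.
by [].
Qed.

Lemma rho4_eq (T : finType) (e : rel T) (r : int) (A0 : {set T}) :
  (forall A, (rho4A e A <= r)%R) -> rho4A e A0 = r -> rho4 e = r.
Proof.
move=> rho_le rhoA0; apply/eqP; rewrite eq_le; apply/andP; split.
- apply: bigmax_le => [|A _]; last exact: rho_le.
  by rewrite -(rho4A_set0 e) rho_le.
- by rewrite -rhoA0; exact: le_bigmax.
Qed.

Lemma sum_card_color_classes (T : finType) k (c : T -> 'I_k) :
  \sum_(i < k) #|[set x | c x == i]| = #|T|.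
Proof.
rewrite -sum1_card (partition_big c xpredT) //=.
by apply: eq_bigr => i _; rewrite sum1dep_card.
Qed.

Lemma equitable_4coloring_card (T : finType) (e : rel T) c i :
  equitable_4coloring e c -> #|T| <= 4 * #|[set x | c x == i]| + 3.
Proof.
case=> _ balanced; rewrite -(sum_card_color_classes c) (bigD1 i) //=.
have : \sum_(j < 4 | j != i) #|[set x | c x == j]|
         <= \sum_(j < 4 | j != i) #|[set x | c x == i]|.+1.
  by apply: leq_sum => j _; rewrite (leq_trans (balanced j i)) ?addn1.
rewrite sum_nat_const cardC1 card_ord => le_rest.
by apply: (leq_trans (leq_add (leqnn _) le_rest)); lia.
Qed.

Lemma sum_nat_eq_indicator N c (b : bool) :
  \sum_(0 <= k < N) ((k == c) && b) = (c < N) && b.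
Proof.
case: b; last by rewrite andbF big1 // => k _; rewrite andbF.
transitivity (nat_of_bool (c \in iota 0 N)); last by rewrite mem_iota andbT.
rewrite -(count_uniq_mem c (iota_uniq 0 N)) -sum1_count [RHS]big_mkcond /index_iota subn0.
by apply: eq_bigr => k _; rewrite andbT /=; case: (k == c).
Qed.

Lemma sum_nat_interval N m l : m + l < N -> \sum_(0 <= k < N) (m < k <= m + l) = l.
Proof.
elim: l => [|l IH] lt_mlN; first by rewrite big1 // => k _; lia.
rewrite (eq_bigr (fun k => (m < k <= m + l) + ((k == m + l.+1) && true))) => [|k _]; last lia.
rewrite big_split /= IH ?sum_nat_eq_indicator; lia.
Qed.

Lemma card_ord_set_sum n (S : {set 'I_n.+1}) :
  #|S| = \sum_(0 <= k < n.+1) (inord k \in S).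
Proof.
rewrite -sum1_card big_mkcond big_mkord /=.
by apply: eq_bigr => k _; rewrite inord_val; case: (k \in S).
Qed.

Lemma big_nat_blocks (R : Type) (idx : R) (op : Monoid.law idx) m b n (F : nat -> R) :
  \big[op/idx]_(m <= k < m + b * n) F k =
  \big[op/idx]_(i < n) \big[op/idx]_(j < b) F (m + b * i + j).
Proof.
elim: n => [|n IH]; first by rewrite muln0 addn0 big_geq // big_ord0.
rewrite big_ord_recr /= -IH mulnSr addnA (@big_cat_nat _ _ _ (m + b * n)) ?leq_addr //=.
congr (op _ _); rewrite -{1}[m + b * n]add0n big_addn addKn big_mkord.
by apply: eq_bigr => j _; rewrite addnC.
Qed.

Section BackNeighbours.
Variables (n : nat) (e : rel 'I_n).
Hypothesis e_simple : simple_graph e.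

Definition back_nbhd (A : {set 'I_n}) (y : 'I_n) : {set 'I_n} :=
  [set x in A | (x < y) && e x y].

Lemma nedges_in_back A : nedges_in e A = \sum_(y in A) #|back_nbhd A y|.
Proof.
have [e_sym e_irr] := e_simple.
pose P := [set p : 'I_n * 'I_n | (p.1 \in A) && (p.2 \in back_nbhd A p.1)].
have edgesE : [set E : {set 'I_n} | [exists x in A, exists y in A, e x y && (E == [set x; y])]]
    = [set [set p.2; p.1] | p in P].
  apply/setP => E; rewrite inE; apply/existsP/imsetP.
  - case=> x /andP[xA /exists_inP[y yA /andP[exy /eqP->]]].
    case: (ltngtP x y) => [xy|yx|/val_inj xy].
    + by exists (y, x); first rewrite !inE yA xA xy exy.
    + by exists (x, y); [rewrite !inE yA xA yx e_sym exy | rewrite setUC].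
    + by move: exy; rewrite xy (negbTE (e_irr y)).
  - case=> -[y x]; rewrite !inE /= => /and4P[yA xA _ exy] ->.
    by exists x; rewrite xA /=; apply/exists_inP; exists y; rewrite ?exy ?eqxx.
have P_inj : {in P &, injective (fun p => [set p.2; p.1])}.
  move=> [y1 x1] [y2 x2]; rewrite !inE /= => /and4P[_ _ lt1 _] /and4P[_ _ lt2 _] E.
  have mem z : z \in [set x1; y1] -> (z == x2) || (z == y2) by rewrite E !inE.
  move: (mem x1) (mem y1) lt1 lt2; rewrite !inE !eqxx orbT => /(_ isT) + /(_ isT).
  by case/orP=> /eqP-> /orP[]/eqP-> // lt1 lt2; exfalso; lia.
rewrite /nedges_in edgesE (card_in_imset P_inj).
under eq_bigr do rewrite -sum1_card.
by rewrite pair_big_dep sum1dep_card.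
Qed.

Lemma rho4A_back A : rho4A e A =
  (\sum_(y in A) (4 * #|back_nbhd A y|%:Z - 5 + 2 * (y \in V1 e)%:Z))%R.
Proof.
have cardAV1 : #|A :&: V1 e| = \sum_(y in A) (y \in V1 e).
  rewrite -sum1_card (eq_bigl (fun y => (y \in A) && (y \in V1 e))) => [|y]; last by rewrite inE.
  by rewrite big_mkcondr; apply: eq_bigr => y _; case: (y \in V1 e).
rewrite /rho4A nedges_in_back cardAV1 -sum1_card.
rewrite !(big_morph Posz PoszD (erefl 0%Z)) !big_split /= -!mulr_sumr.
congr (_ + _ + _)%R.
by rewrite mulr_sumr -sumrN; apply: eq_bigr => y _; rewrite mulr1.
Qed.

End BackNeighbours.

Definition fan_arc (spoke rim : pred nat) (x y : nat) : bool :=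
  (x == 0) && (0 < y) && spoke y || (0 < x) && (y == x.+1) && rim y.

Definition fan_graph n (spoke rim : pred nat) : rel 'I_n :=
  fun x y => fan_arc spoke rim x y || fan_arc spoke rim y x.

(* The contribution of vertex k to rho4A when s is the indicator of A and
   pendant that of V1: edges are charged to their larger endpoint. *)
Definition fan_weight (spoke rim pendant s : pred nat) (k : nat) : int :=
  (if s k
   then 4 * ((s 0 && (0 < k) && spoke k) + ((1 < k) && rim k && s k.-1))%N%:Z - 5
        + 2 * (pendant k : nat)%:Z
   else 0)%R.

Section Fan.
Variables (n : nat) (spoke rim : pred nat).
Local Notation G := (@fan_graph n.+1 spoke rim).

Lemma fan_arc_lt x y : fan_arc spoke rim x y -> x < y.
Proof. by case/orP=> /andP[/andP[]]; lia. Qed.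

Lemma fan_graph_simple : simple_graph G.
Proof.
split=> [x y|x]; first by rewrite /fan_graph orbC.
by apply/negP; rewrite /fan_graph orbb => /fan_arc_lt; rewrite ltnn.
Qed.

Lemma fan_graph_outerplanar : outerplanar G.
Proof.
exists (@nat_of_ord _); split=> [|a b c d]; first exact: val_inj.
have chord x y : G x y -> x = 0 :> nat \/ y = 0 :> nat \/ y = x.+1 :> nat \/ x = y.+1 :> nat.
  by case/orP=> /orP[]/andP[/andP[]]; lia.
by move=> /chord ab /chord cd []; lia.
Qed.

Lemma fan_back_nbhd_card A (y : 'I_n.+1) :
  #|back_nbhd G A y| =
  (inord 0 \in A) && (0 < y) && spoke y + (1 < y) && rim y && (inord y.-1 \in A).
Proof.
rewrite card_ord_set_sum.
transitivity (\sum_(0 <= k < n.+1) ((k == 0) && ((inord 0 \in A) && (0 < y) && spoke y)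
                                  + (k == y.-1) && ((1 < y) && rim y && (inord y.-1 \in A)))).
  apply: eq_big_nat => k /andP[_ kn]; rewrite !inE /fan_graph /fan_arc inordK //.
  case: (eqVneq k 0) => [->|k0]; first lia.
  by case: (eqVneq k y.-1) => [->|ky]; lia.
have := ltn_ord y; rewrite big_split /= !sum_nat_eq_indicator; lia.
Qed.

Lemma fan_degree (k : 'I_n.+1) : 0 < k ->
  degree G k = spoke k + (1 < k) && rim k + (k < n) && rim k.+1.
Proof.
move=> k_pos; rewrite /degree card_ord_set_sum.
transitivity (\sum_(0 <= z < n.+1) ((z == 0) && spoke k + (z == k.-1) && ((1 < k) && rim k)
                                  + (z == k.+1) && ((k < n) && rim k.+1))).
  apply: eq_big_nat => z /andP[_ zn]; rewrite inE /fan_graph /fan_arc inordK //.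
  case: (eqVneq z k.+1) zn => [->|zk] zn; first lia.
  by case: (eqVneq z k.-1) => [->|]; lia.
have := ltn_ord k; rewrite !big_split /= !sum_nat_eq_indicator; lia.
Qed.

Lemma fan_hub_notin_V1 : 1 < n -> spoke 1 -> spoke 2 -> inord 0 \notin V1 G.
Proof.
move=> n_gt1 spoke1 spoke2; rewrite inE /degree.
suff : 1 < #|[set z | G (inord 0) z]| by case: #|_| => [|[|]].
apply/card_gt1P; exists (inord 1), (inord 2).
by rewrite !inE -val_eqE /= /fan_graph /fan_arc !inordK ?spoke1 ?spoke2 //=; lia.
Qed.

Lemma rho4A_fan A : rho4A G A =
  (\sum_(0 <= k < n.+1)
     fan_weight spoke rim (fun k => inord k \in V1 G) (fun k => inord k \in A) k)%R.
Proof.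
rewrite (rho4A_back fan_graph_simple) big_mkcond big_mkord /=.
by apply: eq_bigr => k _; rewrite /fan_weight fan_back_nbhd_card !inord_val.
Qed.

End Fan.

Section FanPetals.
Variables (spoke rim pendant : pred nat).
Local Notation w := (fan_weight spoke rim pendant).

Lemma fan_weight_hub s : ~~ pendant 0 -> w s 0 = (if s 0 then -5 else 0)%R.
Proof. by rewrite /fan_weight /= => /negbTE->; case: (s 0). Qed.

Section Triangle.
Variable k : nat.
Hypothesis k_pos : 0 < k.
Hypotheses (sk : spoke k) (sk1 : spoke k.+1) (rk : ~~ rim k) (rk1 : rim k.+1).
Hypotheses (pk : ~~ pendant k) (pk1 : ~~ pendant k.+1).

Let triangle_weightE s : (w s k + w s k.+1 =
  (if s k then 4 * (s 0 : nat)%:Z - 5 else 0)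
  + (if s k.+1 then 4 * (s 0 + s k : nat)%:Z - 5 else 0))%R.
Proof.
rewrite /fan_weight /= k_pos sk sk1 rk1 !(negbTE rk, negbTE pk, negbTE pk1).
by rewrite !andbF ?ltnS ?k_pos; case: (s 0) (s k) (s k.+1) => [] [] [].
Qed.

Lemma fan_triangle_weight_le s : (w s k + w s k.+1 <= 2 * (s 0 : nat)%:Z)%R.
Proof. by rewrite triangle_weightE; case: (s 0) (s k) (s k.+1) => [] [] []. Qed.

Lemma fan_triangle_weight_full : (w predT k + w predT k.+1 = 2)%R.
Proof. by rewrite triangle_weightE. Qed.

End Triangle.

Section Leaf.
Variable k : nat.
Hypotheses (k_pos : 0 < k) (sk : spoke k) (rk : ~~ rim k) (pk : pendant k).

Let leaf_weightE s : w s k = (if s k then 4 * (s 0 : nat)%:Z - 3 else 0)%R.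
Proof. by rewrite /fan_weight k_pos sk pk (negbTE rk) andbF; case: (s 0) (s k) => [] []. Qed.

Lemma fan_leaf_weight_le s : (w s k <= (s 0 : nat)%:Z)%R.
Proof. by rewrite leaf_weightE; case: (s 0) (s k) => [] []. Qed.

Lemma fan_leaf_weight_full : w predT k = 1%R.
Proof. by rewrite leaf_weightE. Qed.

End Leaf.

Section Pentagon.
Variable k : nat.
Hypothesis k_pos : 0 < k.
Hypotheses (sk : spoke k) (sk1 : ~~ spoke k.+1) (sk2 : ~~ spoke k.+2) (sk3 : spoke k.+3).
Hypotheses (rk : ~~ rim k) (rk1 : rim k.+1) (rk2 : rim k.+2) (rk3 : rim k.+3).
Hypotheses (pk : ~~ pendant k) (pk1 : ~~ pendant k.+1) (pk2 : ~~ pendant k.+2) (pk3 : ~~ pendant k.+3).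

Let pentagon_weightE s : (w s k + w s k.+1 + w s k.+2 + w s k.+3 =
  (if s k then 4 * (s 0 : nat)%:Z - 5 else 0)
  + (if s k.+1 then 4 * (s k : nat)%:Z - 5 else 0)
  + (if s k.+2 then 4 * (s k.+1 : nat)%:Z - 5 else 0)
  + (if s k.+3 then 4 * (s 0 + s k.+2 : nat)%:Z - 5 else 0))%R.
Proof.
rewrite /fan_weight /= k_pos sk sk3 rk1 rk2 rk3.
rewrite !(negbTE sk1, negbTE sk2, negbTE rk, negbTE pk, negbTE pk1, negbTE pk2, negbTE pk3).
by rewrite !andbF ?ltnS ?k_pos; case: (s 0) (s k) (s k.+1) (s k.+2) (s k.+3) => [] [] [] [] [].
Qed.

Lemma fan_pentagon_weight_le s : (w s k + w s k.+1 + w s k.+2 + w s k.+3 <= 0)%R.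
Proof.
by rewrite pentagon_weightE; case: (s 0) (s k) (s k.+1) (s k.+2) (s k.+3) => [] [] [] [] [].
Qed.

Lemma fan_pentagon_weight_full : (w predT k + w predT k.+1 + w predT k.+2 + w predT k.+3 = 0)%R.
Proof. by rewrite pentagon_weightE. Qed.

End Pentagon.

End FanPetals.

Definition flower_spoke a l k :=
  (k <= 2*a+l) || ((k - (2*a+l).+1) %% 4 == 0) || ((k - (2*a+l).+1) %% 4 == 3).
Definition flower_rim a l k :=
  (k <= 2*a) && (k %% 2 == 0) || ((2*a+l).+1 < k) && ((k - (2*a+l).+1) %% 4 != 0).
Definition flower_leaf a l k := 2*a < k <= 2*a+l.

(* Vertex 0 is the hub; the triangles are {0, 2i+1, 2i+2} for i < a, the
   leaves are 2a+1, ..., 2a+l, and the pentagons are 0, m, m+1, m+2, m+3 for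
   m = 2a+l+1+4i, i < t. *)
Definition flower a l t : rel 'I_(2*a+l+4*t).+1 :=
  @fan_graph _ (flower_spoke a l) (flower_rim a l).
Arguments flower : clear implicits.

Section Flower.
Variables a l t : nat.
Local Notation N := (2*a+l+4*t).
Local Notation G := (flower a l t).
Local Notation w := (fan_weight (flower_spoke a l) (flower_rim a l) (flower_leaf a l)).

Lemma V1_flower : 1 < 2*a+l -> V1 G = [set k : 'I_N.+1 | flower_leaf a l k].
Proof.
move=> al2; apply/setP => k; rewrite [RHS]inE.
case: (posnP k) => [k0|k_pos].
- have -> : k = inord 0 by apply: val_inj; rewrite /= inordK.
  rewrite inordK // /flower_leaf /=.
  by apply/negbTE/fan_hub_notin_V1; rewrite /flower_spoke; lia.
- have := ltn_ord k.
  by rewrite inE fan_degree // /flower_spoke /flower_rim /flower_leaf; lia.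
Qed.

Lemma card_V1_flower : 1 < 2*a+l -> #|V1 G| = l.
Proof.
move=> al2; rewrite V1_flower // card_ord_set_sum.
transitivity (\sum_(0 <= k < N.+1) (2*a < k <= 2*a + l)); last by apply: sum_nat_interval; lia.
by apply: eq_big_nat => k /andP[_ kN]; rewrite inE inordK.
Qed.

Lemma rho4A_flower A : 1 < 2*a+l ->
  rho4A G A = (\sum_(0 <= k < N.+1) w (fun k => inord k \in A) k)%R.
Proof.
move=> al2; rewrite rho4A_fan; apply: eq_big_nat => k /andP[_ kN].
by rewrite /fan_weight V1_flower // inE inordK.
Qed.

Local Notation triangles s := (\sum_(i < a) (w s (1 + 2*i) + w s (1 + 2*i).+1))%R.
Local Notation leaves s := (\sum_(i < l) w s (1 + 2*a + i))%R.
Local Notation pentagons s := (\sum_(i < t) (w s (1 + 2*a + l + 4*i) + w s (1 + 2*a + l + 4*i).+1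
  + w s (1 + 2*a + l + 4*i).+2 + w s (1 + 2*a + l + 4*i).+3))%R.

Lemma sum_flower_weight s :
  (\sum_(0 <= k < N.+1) w s k = w s 0 + triangles s + leaves s + pentagons s)%R.
Proof.
have -> : N.+1 = 1 + 2 * a + 1 * l + 4 * t by lia.
rewrite big_ltn // (@big_cat_nat _ _ _ (1 + 2 * a + 1 * l)) ?leq_addr //.
rewrite (@big_cat_nat _ _ _ (1 + 2 * a)) ?leq_addr // !big_nat_blocks /= !mul1n !addrA.
by congr (_ + _ + _ + _)%R; apply: eq_bigr => i _;
  rewrite !big_ord_recr big_ord0 /= add0r ?mul1n ?addn0 ?addn1 ?addn2 ?addn3.
Qed.

Lemma sum_flower_weight_le s : 4 < 2*a+l ->
  (\sum_(0 <= k < N.+1) w s k <= (2*a+l)%:Z - 5)%R.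
Proof.
move=> al5; rewrite sum_flower_weight fan_weight_hub; last by rewrite /flower_leaf.
have [tri leaf pent] : [/\ (triangles s <= \sum_(i < a) 2 * (s 0 : nat)%:Z)%R,
    (leaves s <= \sum_(i < l) (s 0 : nat)%:Z)%R & (pentagons s <= 0)%R].
  split; [apply: ler_sum | apply: ler_sum | apply: sumr_le0] => i _; have i_lt := ltn_ord i;
  [apply: fan_triangle_weight_le | apply: fan_leaf_weight_le | apply: fan_pentagon_weight_le];
  rewrite /flower_spoke /flower_rim /flower_leaf; lia.
apply: le_trans (lerD (lerD (lerD (lexx _) tri) leaf) pent) _ => {tri leaf pent}.
by rewrite !sumr_const !card_ord; case: (s 0); lia.
Qed.

Lemma sum_flower_weight_full : (\sum_(0 <= k < N.+1) w predT k = (2*a+l)%:Z - 5)%R.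
Proof.
rewrite sum_flower_weight fan_weight_hub; last by rewrite /flower_leaf.
have [tri leaf pent] : [/\ triangles predT = (\sum_(i < a) 2)%R,
    leaves predT = (\sum_(i < l) 1)%R & pentagons predT = 0%R].
  split; [apply: eq_bigr | apply: eq_bigr | apply: big1] => i _; have i_lt := ltn_ord i;
  [apply: fan_triangle_weight_full | apply: fan_leaf_weight_full | apply: fan_pentagon_weight_full];
  rewrite /flower_spoke /flower_rim /flower_leaf; lia.
by rewrite tri leaf pent !sumr_const !card_ord /=; lia.
Qed.

Lemma rho4_flower : 4 < 2*a+l -> rho4 G = ((2*a+l)%:Z - 5)%R.
Proof.
move=> al5; apply: (rho4_eq (A0 := setT)) => [A|]; rewrite rho4A_flower; try lia.
- exact: sum_flower_weight_le.
- by rewrite -sum_flower_weight_full; apply: eq_big_nat => k _; rewrite /fan_weight !in_setT.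
Qed.

Lemma flower_hub_nonadj (k : 'I_N.+1) : 0 < k -> ~~ G (inord 0) k -> ~~ flower_spoke a l k.
Proof. by move=> k_pos; rewrite /flower /fan_graph /fan_arc inordK //= k_pos !andbF !orbF. Qed.

Lemma flower_nonspoke_index k : k < N.+1 -> ~~ flower_spoke a l k -> (k - (2*a+l).+1) %/ 4 < t.
Proof. by rewrite /flower_spoke; lia. Qed.

Lemma flower_nonspoke_adj (x y : 'I_N.+1) : ~~ flower_spoke a l x -> ~~ flower_spoke a l y ->
  x < y -> (x - (2*a+l).+1) %/ 4 = (y - (2*a+l).+1) %/ 4 -> G x y.
Proof.
move=> nx ny xy same_index; rewrite /flower /fan_graph /fan_arc.
have [yx rim_y] : y = x.+1 :> nat /\ flower_rim a l y.
  by move: nx ny; rewrite /flower_spoke /flower_rim; lia.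
have x_pos : 0 < x by move: nx; rewrite /flower_spoke; lia.
by rewrite x_pos rim_y yx eqxx orbT.
Qed.

Lemma flower_hub_class_card (c : 'I_N.+1 -> 'I_4) : (forall x y, G x y -> c x != c y) ->
  #|[set x | c x == c (inord 0)]| <= t.+1.
Proof.
move=> proper; set C := [set x | _].
pose f (x : 'I_N.+1) : 'I_t.+1 := inord (if x == 0 :> nat then t else (x - (2*a+l).+1) %/ 4).
suff f_inj : {in C &, injective f} by rewrite -[t.+1]card_ord; exact: leq_card_in f_inj.
have indep x y : x \in C -> y \in C -> ~~ G x y.
  by rewrite !inE => /eqP cx /eqP cy; apply/negP => /proper; rewrite cx cy eqxx.
have nonspoke x : x \in C -> 0 < x -> ~~ flower_spoke a l x.
  by move=> xC x_pos; apply: flower_hub_nonadj x_pos (indep _ _ _ xC); rewrite inE.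
have f_val x : x \in C -> f x = (if x == 0 :> nat then t else (x - (2*a+l).+1) %/ 4) :> nat.
  move=> xC; rewrite inordK //; case: ifP => // /negbT; rewrite -lt0n => x_pos.
  exact/ltnW/(flower_nonspoke_index (ltn_ord x))/nonspoke.
have f_lt u v : u \in C -> v \in C -> u < v -> f u != f v.
  move=> uC vC uv; apply/negP => /eqP/(congr1 val); rewrite /= f_val // f_val //.
  have v_pos : 0 < v by apply: leq_ltn_trans uv.
  have v_idx := flower_nonspoke_index (ltn_ord v) (nonspoke v vC v_pos).
  have /negbTE-> : v != 0 :> nat by rewrite -lt0n.
  case: eqP => [_ t_idx|/eqP]; first by lia.
  rewrite -lt0n => u_pos same_index; apply/negP: (indep u v uC vC).
  by rewrite flower_nonspoke_adj ?nonspoke.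
move=> x y xC yC fxy; case: (ltngtP x y) => [xy|yx|/val_inj //].
- by move: (f_lt x y xC yC xy); rewrite fxy eqxx.
- by move: (f_lt y x yC xC yx); rewrite fxy eqxx.
Qed.

Lemma flower_no_equitable_4coloring : 6 < 2*a+l -> ~ exists c, equitable_4coloring G c.
Proof.
move=> al7 [c col]; have [proper _] := col.
have := equitable_4coloring_card (c (inord 0)) col; rewrite card_ord.
have := flower_hub_class_card proper; lia.
Qed.

End Flower.

Theorem mainTheorem4 :
  forall n l : nat, (l <= 8)%N ->
  exists (N : nat) (e : rel 'I_N),
    simple_graph e /\ outerplanar e /\ (n < N)%N /\ #|V1 e| = l /\
    rho4 e = (3%:Z - (sigma4 e)%:Z)%R /\
    ~ (exists c : 'I_N -> 'I_4, equitable_4coloring e c).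
Proof.
move=> n l l_le8; pose a := (8 - l)./2.
have al : 2 * a + l = 8 - odd l by rewrite /a; lia.
have V1l : #|V1 (flower a l n)| = l by rewrite card_V1_flower //; lia.
exists _, (flower a l n); split; first exact: fan_graph_simple.
split; first exact: fan_graph_outerplanar.
split; first lia.
split; first exact: V1l.
split; last by apply: flower_no_equitable_4coloring; lia.
by rewrite rho4_flower /sigma4; lia.
Qed.
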